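(* Let $D_\ast,E_\ast$ be chain complexes, $j$ an integer and $\varphi:D_\ast\to E_\ast$ a chain homotopy equivalence such that $\varphi_i:D_i\to E_i$ is an isomorphism for all $i\leq j-1$. Then there is a chain homotopy inverse $\psi:E_\ast\to D_\ast$ of $\varphi$ with $\psi_i=\varphi_i^{-1}$ for all $i\leq j-1$. *)

From HB Require Import structures.
From mathcomp Require Import all_boot all_order all_algebra.
Set Implicit Arguments. Unset Strict Implicit. Unset Printing Implicit Defensive.
Import Order.TTheory GRing.Theory Num.Theory.
Local Open Scope ring_scope.

(* A chain complex: modules C_i (i : int) with differentials
   d_i : C_(i+1) -> C_i (i.e. the differential out of degree i+1) and d o d = 0. *)
Record chain_complex (R : nzRingType) := ChainComplex {
  cobj : int -> lmodType R;
  cdiff : forall i : int, {linear cobj (i + 1) -> cobj i};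
  cdiff2 : forall (i : int) (x : cobj (i + 1 + 1)), cdiff i (cdiff (i + 1) x) = 0
}.

Definition is_chain_map (R : nzRingType) (C D : chain_complex R)
  (f : forall i : int, cobj C i -> cobj D i) : Prop :=
  forall (i : int) (x : cobj C (i + 1)), f i (cdiff C i x) = cdiff D i (f (i + 1) x).

(* f and g are chain homotopic: there are R-linear h_i : C_i -> D_(i+1) with
   f_n - g_n = d h_n + h_(n-1) d in every degree n (written n = i+1). *)
Definition chain_homotopic (R : nzRingType) (C D : chain_complex R)
  (f g : forall i : int, cobj C i -> cobj D i) : Prop :=
  exists h : forall i : int, {linear cobj C i -> cobj D (i + 1)},
    forall (i : int) (x : cobj C (i + 1)),
      f (i + 1) x - g (i + 1) x = cdiff D (i + 1) (h (i + 1) x) + h i (cdiff C i x).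

Definition id_chain (R : nzRingType) (C : chain_complex R) :
  forall i : int, cobj C i -> cobj C i := fun i x => x.

Definition comp_chain (R : nzRingType) (C D E : chain_complex R)
  (g : forall i : int, cobj D i -> cobj E i) (f : forall i : int, cobj C i -> cobj D i) :
  forall i : int, cobj C i -> cobj E i := fun i x => g i (f i x).

Definition chain_homotopy_inverse (R : nzRingType) (C D : chain_complex R)
  (phi : forall i : int, {linear cobj C i -> cobj D i})
  (psi : forall i : int, {linear cobj D i -> cobj C i}) : Prop :=
  [/\ is_chain_map (fun i => psi i),
      chain_homotopic (comp_chain (fun i => psi i) (fun i => phi i)) (@id_chain R C)
    & chain_homotopic (comp_chain (fun i => phi i) (fun i => psi i)) (@id_chain R D)].

Definition chain_homotopy_equivalence (R : nzRingType) (C D : chain_complex R)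
  (phi : forall i : int, {linear cobj C i -> cobj D i}) : Prop :=
  is_chain_map (fun i => phi i) /\
  exists psi : forall i : int, {linear cobj D i -> cobj C i}, chain_homotopy_inverse phi psi.

(* If g is a homotopy inverse of the chain map phi, with g phi - 1 = dh + hd, then
   g - (ds + sd) is again a homotopy inverse for any family s of maps raising the
   degree by one.  Taking s = h phi^-1 wherever phi is invertible gives
   (g - ds - sd) phi = g phi - dh - hd = 1 in every degree n such that phi_n and
   phi_(n-1) are both invertible. *)
From Stdlib Require Import Classical IndefiniteDescription.
From HB Require Import structures.
From mathcomp Require Import all_boot all_order all_algebra.
Import Order.TTheory GRing.Theory Num.Theory.
Set Implicit Arguments. Unset Strict Implicit. Unset Printing Implicit Defensive.
Local Open Scope ring_scope.

Lemma forall_addr1 (P : int -> Prop) : (forall i, P (i + 1)) -> forall n, P n.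
Proof. by move=> HP n; rewrite -(subrK 1 n). Qed.

Definition cobj_cast (R : nzRingType) (C : chain_complex R) (a b : int) (e : a = b) :
    {linear cobj C a -> cobj C b} :=
  eq_rect a (fun b => {linear cobj C a -> cobj C b}) idfun b e.

Lemma cobj_cast_conj (R : nzRingType) (C D : chain_complex R)
    (F : forall m, cobj C (m + 1) -> cobj D (m + 1)) (m i : int) (e : m + 1 = i + 1) y :
  cobj_cast D e (F m (cobj_cast C (esym e) y)) = F i y.
Proof.
have em : m = i by apply: (addIr 1).
by subst m; rewrite (eq_irrelevance e erefl).
Qed.

Section NullHomotopic.
Variables (R : nzRingType) (C D : chain_complex R).
Implicit Types s t : forall i, {linear cobj C i -> cobj D (i + 1)}.

(* [n - 1 + 1] is not convertible to [n], whence the casts; [dsdS] is the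
   form used in practice. *)
Definition dsd s (n : int) : {linear cobj C n -> cobj D n} :=
  (cdiff D n \o s n) \+
  (cobj_cast D (subrK 1 n) \o s (n - 1) \o cdiff C (n - 1) \o cobj_cast C (esym (subrK 1 n))).

Lemma dsdS s i x : dsd s (i + 1) x = cdiff D (i + 1) (s (i + 1) x) + s i (cdiff C i x).
Proof.
by rewrite /dsd /=; congr (_ + _); apply: (cobj_cast_conj (fun m y => s m (cdiff C m y))).
Qed.

Lemma chain_homotopicE (f g : forall i, cobj C i -> cobj D i) :
  chain_homotopic f g <-> exists s, forall n x, f n x - g n x = dsd s n x.
Proof.
split=> -[s hs]; exists s; last by move=> i x; rewrite hs dsdS.
by apply: forall_addr1 => i x; rewrite dsdS hs.
Qed.

Lemma dsd_chain s : is_chain_map (dsd s).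
Proof.
apply: forall_addr1 => i x.
by rewrite !dsdS !linearD /= !cdiff2 linear0 addr0 add0r.
Qed.

Lemma sub_dsdE (f : forall n, {linear cobj C n -> cobj D n}) s n x :
  (f n \- dsd s n : {linear _ -> _}) x = f n x - dsd s n x.
Proof. by []. Qed.

Lemma dsdB s t n x : dsd (fun i => s i \- t i) n x = dsd s n x - dsd t n x.
Proof. by rewrite /dsd /= !linearB opprD addrACA. Qed.

Lemma eq_dsd s t n :
  s n =1 t n -> s (n - 1) =1 t (n - 1) -> dsd s n =1 dsd t n.
Proof. by move=> hn hn1 x; rewrite /dsd /= hn hn1. Qed.

End NullHomotopic.

Lemma dsd_compl (R : nzRingType) (B C D : chain_complex R)
    (f : forall i, {linear cobj B i -> cobj C i})
    (s : forall i, {linear cobj C i -> cobj D (i + 1)}) :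
  is_chain_map (fun i => f i) -> forall n x, dsd (fun i => s i \o f i) n x = dsd s n (f n x).
Proof. by move=> fc; apply: forall_addr1 => i x; rewrite !dsdS /= fc. Qed.

Lemma dsd_compr (R : nzRingType) (C D E : chain_complex R)
    (f : forall i, {linear cobj D i -> cobj E i})
    (s : forall i, {linear cobj C i -> cobj D (i + 1)}) :
  is_chain_map (fun i => f i) ->
  forall n x, dsd (fun i => f (i + 1) \o s i) n x = f n (dsd s n x).
Proof. by move=> fc; apply: forall_addr1 => i x; rewrite !dsdS /= linearD fc. Qed.

Lemma chain_homotopy_inverse_subr_dsd (R : nzRingType) (C D : chain_complex R)
    (phi : forall i, {linear cobj C i -> cobj D i}) (psi : forall i, {linear cobj D i -> cobj C i})
    (s : forall i, {linear cobj D i -> cobj C (i + 1)}) :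
  is_chain_map (fun i => phi i) -> chain_homotopy_inverse phi psi ->
  chain_homotopy_inverse phi (fun n => psi n \- dsd s n).
Proof.
move=> phic [psic /chain_homotopicE [t ht] /chain_homotopicE [u hu]].
split.
- by move=> i x; rewrite !sub_dsdE psic (dsd_chain s) linearB.
- apply/chain_homotopicE; exists (fun i => t i \- (s i \o phi i)) => n x.
  by rewrite dsdB dsd_compl // -ht /comp_chain /id_chain /= addrAC.
- apply/chain_homotopicE; exists (fun i => u i \- (phi (i + 1) \o s i)) => n x.
  by rewrite dsdB dsd_compr // -hu /comp_chain /id_chain /= linearB addrAC.
Qed.

Lemma exists_linear_left_inverses (R : nzRingType) (I : Type) (U V : I -> lmodType R)
    (f : forall i, {linear U i -> V i}) :
  exists g : forall i, {linear V i -> U i}, forall i, bijective (f i) -> cancel (f i) (g i).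
Proof.
have inv i : exists g : {linear V i -> U i}, bijective (f i) -> cancel (f i) g.
  have [[g fK gK]|nbij] := classic (bijective (f i)); last by exists \0.
  by exists (HB.pack_for {linear V i -> U i} g
    (GRing.isLinear.Build R (V i) (U i) *:%R g (can2_linear fK gK))).
exists (fun i => proj1_sig (constructive_indefinite_description _ (inv i))).
by move=> i; case: constructive_indefinite_description.
Qed.

Theorem lemma6p5 (R : nzRingType) (D E : chain_complex R) (j : int)
  (phi : forall i : int, {linear cobj D i -> cobj E i})
  (hphi : chain_homotopy_equivalence phi)
  (hiso : forall i : int, i <= j - 1 -> bijective (phi i)) :
  exists psi : forall i : int, {linear cobj E i -> cobj D i},
    chain_homotopy_inverse phi psi /\
    (forall i : int, i <= j - 1 -> cancel (phi i) (psi i) /\ cancel (psi i) (phi i)).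
Proof.
case: hphi => phic [g ginv].
have [_ /chain_homotopicE [h hgphi] _] := ginv.
have [rho rhoK] := exists_linear_left_inverses phi.
exists (fun n => g n \- dsd (fun i => h i \o rho i) n).
split; first exact: chain_homotopy_inverse_subr_dsd.
move=> i hi; have hi1 : i - 1 <= j - 1 by apply: le_trans hi; rewrite gerBl.
have psiK : cancel (phi i) (g i \- dsd (fun i => h i \o rho i) i).
  move=> x; rewrite sub_dsdE -dsd_compl // (eq_dsd (t := h)) => [|y|y].
  - by rewrite -hgphi /comp_chain /id_chain subKr.
  - by rewrite /= (rhoK _ (hiso _ hi)).
  - by rewrite /= (rhoK _ (hiso _ hi1)).
by split=> //; apply/(bij_can_sym (hiso i hi)).
Qed.
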